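(* Let $a_n$ be the number of equivalence classes of period configurations of Parallel Diffusion on the unlabelled complete graph $K_n$, and let $\alpha\approx 3.2056$ be the unique real root of $x^3-5x^2+7x-4$. Then $a_n\sim c\,\alpha^n$ as $n\to\infty$ for a constant $c\approx 0.1809$; that is, $a_n/\alpha^n$ converges to a positive constant approximately equal to $0.1809$.
   Context: Parallel Diffusion on a graph $G$: a configuration assigns an integer stack size $|v|$ to each vertex. One firing step replaces every stack size simultaneously by $|v| + \#\{u\in N(v): |u|>|v|\} - \#\{u\in N(v): |u|<|v|\}$. A period configuration is a configuration $D$ such that repeated firing starting from $D$ returns to $D$ after some positive number of steps. On the complete graph $K_n$ with unlabelled vertices, a configuration is a multiset of $n$ integers. Two configurations are equivalent if one is obtained from the other by adding the same integer to every stack size. *)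

From Stdlib Require Import ZArith List Permutation Reals.
Import ListNotations.

(* On K_n every other vertex
   is a neighbour; the vertex itself is never counted since x < x is false. *)
Definition fire (s : list Z) : list Z :=
  map (fun x => (x + Z.of_nat (length (filter (fun y => Z.ltb x y) s))
                   - Z.of_nat (length (filter (fun y => Z.ltb y x) s)))%Z) s.

(* Unlabelled configuration = multiset; lists are compared up to Permutation.
   A period configuration returns to itself (as a multiset) after some
   positive number of firing steps. *)
Definition period_config (s : list Z) : Prop :=
  exists k : nat, (0 < k)%nat /\ Permutation (Nat.iter k fire s) s.

Definition config_equiv (s t : list Z) : Prop :=
  exists c : Z, Permutation s (map (fun x => (x + c)%Z) t).

Definition num_period_classes (n m : nat) : Prop :=
  exists L : list (list Z),
    length L = m /\
    Forall (fun s => length s = n /\ period_config s) L /\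
    ForallOrdPairs (fun s t => ~ config_equiv s t) L /\
    (forall s, length s = n -> period_config s -> Exists (config_equiv s) L).

(* A configuration is
      periodic iff firing strictly reverses the order of distinct stacks
      ([order_reversing]).  Such configurations satisfy fire (fire s) = s; conversely
      an energy that never increases and a collision count that never decreases
      must both be constant along a periodic orbit, which forces order reversal.
   2. Normal forms.  Translating the minimum to 0, an order reversing configuration
      is either all zeros or [m] zeros below a translate, by a gap g >= 1, of a
      smaller normal form t, where order reversal amounts to g < m + #zeros(t).  The number A n of normal forms and their total number B n of
      zeros obey convolution identities, computed by a 4-dimensional linear
      recursion whose characteristic polynomial is x (x^3 - 5 x^2 + 7 x - 4);
      hence A (n+3) = 5 A (n+2) - 7 A (n+1) + 4 A n for n >= 2, with
      A 2, A 3, A 4 = 2, 6, 19.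
   4. Asymptotics.  The cubic has one real root alpha and two complex roots of
      modulus < 3 < alpha, so A n / alpha^n converges to an explicit constant,
      which lies in (0.1808, 0.1810). *)

From Stdlib Require Import ZArith List Permutation Reals Lia Lra.
Import ListNotations.

Local Open Scope Z_scope.

Fixpoint zsum {X : Type} (f : X -> Z) (l : list X) : Z :=
  match l with [] => 0 | x :: l => f x + zsum f l end.

Definition zsum2 (f : Z -> Z -> Z) (s : list Z) : Z :=
  zsum (fun a => zsum (f a) s) s.

Section Sums.
Context {X : Type}.
Implicit Types (f g : X -> Z) (l : list X).

Lemma zsum_app f l1 l2 : zsum f (l1 ++ l2) = zsum f l1 + zsum f l2.
Proof. induction l1 as [|x l1 IH]; cbn; lia. Qed.

Lemma zsum_perm f l1 l2 : Permutation l1 l2 -> zsum f l1 = zsum f l2.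
Proof. induction 1; cbn; lia. Qed.

Lemma zsum_ext_in f g l : (forall x, In x l -> f x = g x) -> zsum f l = zsum g l.
Proof.
  induction l as [|x l IH]; intro H; cbn; [reflexivity|].
  rewrite (H x (or_introl eq_refl)), IH; [reflexivity|].
  intros y Hy. apply H. right. exact Hy.
Qed.

Lemma zsum_add f g l : zsum (fun x => f x + g x) l = zsum f l + zsum g l.
Proof. induction l; cbn; lia. Qed.

Lemma zsum_sub f g l : zsum (fun x => f x - g x) l = zsum f l - zsum g l.
Proof. induction l; cbn; lia. Qed.

Lemma zsum_scal k f l : zsum (fun x => k * f x) l = k * zsum f l.
Proof. induction l; cbn; lia. Qed.

Lemma zsum_const c l : zsum (fun _ => c) l = c * Z.of_nat (length l).
Proof. induction l; cbn [zsum length]; lia. Qed.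

Lemma zsum_map {Y : Type} (f : Y -> Z) (h : X -> Y) l :
  zsum f (map h l) = zsum (fun x => f (h x)) l.
Proof. induction l; cbn; lia. Qed.

Lemma zsum_nonneg f l : (forall x, In x l -> 0 <= f x) -> 0 <= zsum f l.
Proof.
  induction l as [|x l IH]; intro H; cbn; [lia|].
  pose proof (H x (or_introl eq_refl)). pose proof (IH (fun y Hy => H y (or_intror Hy))). lia.
Qed.

Lemma zsum_nonneg_eq0 f l : (forall x, In x l -> 0 <= f x) -> zsum f l = 0 ->
  forall x, In x l -> f x = 0.
Proof.
  induction l as [|y l IH]; intros H E x Hx; [destruct Hx|].
  cbn in E. pose proof (H y (or_introl eq_refl)).
  pose proof (zsum_nonneg f l (fun z Hz => H z (or_intror Hz))).
  destruct Hx as [<-|Hx]; [lia|].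
  apply IH; auto; [intros; apply H; right; auto | lia].
Qed.

End Sums.

Lemma zsum_flat_map {X Y : Type} (f : Y -> Z) (F : X -> list Y) (l : list X) :
  zsum f (flat_map F l) = zsum (fun x => zsum f (F x)) l.
Proof. induction l as [|x l IH]; [reflexivity|]. cbn [flat_map]. rewrite zsum_app, IH. reflexivity. Qed.

Lemma zsum_comm {X Y : Type} (f : X -> Y -> Z) (l1 : list X) (l2 : list Y) :
  zsum (fun a => zsum (f a) l2) l1 = zsum (fun b => zsum (fun a => f a b) l1) l2.
Proof.
  induction l1 as [|a l1 IH]; cbn.
  - induction l2; cbn; lia.
  - rewrite IH, <- zsum_add. reflexivity.
Qed.

Lemma zsum2_add f g s : zsum2 (fun a b => f a b + g a b) s = zsum2 f s + zsum2 g s.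
Proof. unfold zsum2. rewrite <- zsum_add. apply zsum_ext_in. intros. apply zsum_add. Qed.

Lemma zsum2_sub f g s : zsum2 (fun a b => f a b - g a b) s = zsum2 f s - zsum2 g s.
Proof. unfold zsum2. rewrite <- zsum_sub. apply zsum_ext_in. intros. apply zsum_sub. Qed.

Lemma zsum2_map f h s : zsum2 f (map h s) = zsum2 (fun a b => f (h a) (h b)) s.
Proof. unfold zsum2. rewrite zsum_map. apply zsum_ext_in. intros. apply zsum_map. Qed.

Lemma zsum2_perm f s t : Permutation s t -> zsum2 f s = zsum2 f t.
Proof.
  intro P. unfold zsum2. rewrite (zsum_perm _ s t P).
  apply zsum_ext_in. intros. apply zsum_perm, P.
Qed.

Lemma zsum2_antisym f s : (forall a b, f a b = - f b a) -> zsum2 f s = 0.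
Proof.
  intro H. assert (E : zsum2 f s = -1 * zsum2 f s).
  { unfold zsum2. rewrite zsum_comm at 1. rewrite <- zsum_scal. apply zsum_ext_in. intros.
    rewrite <- zsum_scal. apply zsum_ext_in. intros. rewrite H. lia. }
  lia.
Qed.

Lemma zsum2_nonneg f s : (forall a b, In a s -> In b s -> 0 <= f a b) -> 0 <= zsum2 f s.
Proof. intro H. apply zsum_nonneg. intros. apply zsum_nonneg. auto. Qed.

Lemma zsum2_nonneg_eq0 f s : (forall a b, In a s -> In b s -> 0 <= f a b) ->
  zsum2 f s = 0 -> forall a b, In a s -> In b s -> f a b = 0.
Proof.
  intros H E a b Ha Hb.
  refine (zsum_nonneg_eq0 _ _ (fun b Hb => H a b Ha Hb) _ b Hb).
  exact (zsum_nonneg_eq0 _ _ (fun a Ha => zsum_nonneg _ _ (fun b Hb => H a b Ha Hb)) E a Ha).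
Qed.

Definition n_above (s : list Z) (x : Z) : Z := Z.of_nat (length (filter (fun y => x <? y) s)).
Definition n_below (s : list Z) (x : Z) : Z := Z.of_nat (length (filter (fun y => y <? x) s)).

Definition fired (s : list Z) (x : Z) : Z := x + n_above s x - n_below s x.

Lemma fire_map s : fire s = map (fired s) s.
Proof. reflexivity. Qed.

Lemma fired_sgn s x : fired s x = x + zsum (fun y => Z.sgn (y - x)) s.
Proof.
  unfold fired, n_above, n_below. induction s as [|y s IH]; cbn [filter zsum]; [lia|].
  destruct (Z.sgn_spec (y - x)) as [[? ->]|[[? ->]|[? ->]]];
  destruct (Z.ltb_spec x y); destruct (Z.ltb_spec y x); cbn [length]; lia.
Qed.

(* The configurations whose firing strictly reverses the order of distinct stacks;
   they turn out to be exactly the period configurations. *)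
Definition order_reversing (s : list Z) : Prop :=
  forall a b, In a s -> In b s -> a < b -> fired s b < fired s a.

Lemma order_reversing_ltb s a b : order_reversing s -> In a s -> In b s ->
  (fired s a <? fired s b) = (b <? a).
Proof.
  intros R Ha Hb. destruct (Z.lt_trichotomy a b) as [h|[<-|h]].
  - pose proof (R a b Ha Hb h).
    destruct (Z.ltb_spec (fired s a) (fired s b)), (Z.ltb_spec b a); lia.
  - rewrite !Z.ltb_irrefl. reflexivity.
  - pose proof (R b a Hb Ha h).
    destruct (Z.ltb_spec (fired s a) (fired s b)), (Z.ltb_spec b a); lia.
Qed.

(* Firing reverses the order, so firing again swaps the roles of "above" and
   "below" and undoes the first step. *)
Lemma fire_twice s : order_reversing s -> fire (fire s) = s.
Proof.
  intro R. rewrite !fire_map, map_map. rewrite <- (map_id s) at 2.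
  apply map_ext_in. intros a Ha. unfold fired at 1, n_above, n_below.
  rewrite !filter_map_swap, !length_map.
  rewrite (filter_ext_in (fun b => fired s a <? fired s b) (fun b => b <? a) s)
    by (intros; apply order_reversing_ltb; auto).
  rewrite (filter_ext_in (fun b => fired s b <? fired s a) (fun b => a <? b) s)
    by (intros; apply order_reversing_ltb; auto).
  unfold fired, n_above, n_below. lia.
Qed.

Lemma order_reversing_period s : order_reversing s -> period_config s.
Proof.
  intro R. exists 2%nat. split; [lia|]. change (Permutation (fire (fire s)) s).
  rewrite (fire_twice s R). apply Permutation_refl.
Qed.

(* [energy] never increases under firing; [dissipation s a b] is the loss on the
   ordered pair (a, b).  For [a < b] it vanishes exactly when [fired s b <= fired s a]. *)
Definition energy (s : list Z) : Z :=
  2 * zsum (fun a => a * a) s - zsum2 (fun a b => Z.abs (a - b)) s.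

Definition dissipation (s : list Z) (a b : Z) : Z :=
  Z.abs (fired s a - fired s b) - (fired s a - fired s b) * Z.sgn (b - a).

Lemma dissipation_nonneg s a b : 0 <= dissipation s a b.
Proof. unfold dissipation. destruct (Z.sgn_spec (b - a)) as [[? ->]|[[? ->]|[? ->]]]; lia. Qed.

(* With [fired s a = a + c a], [c a = sum_b sgn (b - a)],
   the change of [2 sum a^2] is a double sum whose antisymmetric part cancels against
   the change of [sum |a - b|]; what remains is the total dissipation. *)
Lemma energy_fire s : energy (fire s) + zsum2 (dissipation s) s = energy s.
Proof.
  rewrite fire_map. unfold energy, dissipation. rewrite zsum_map, zsum2_map, zsum2_sub.
  set (c := fun a => zsum (fun b => Z.sgn (b - a)) s).
  assert (Hf : forall a, fired s a = a + c a) by (intro; apply fired_sgn).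
  assert (Esq : 2 * zsum (fun a => fired s a * fired s a) s - 2 * zsum (fun a => a * a) s =
                zsum2 (fun a b => (4 * a + 2 * c a) * Z.sgn (b - a)) s).
  { rewrite <- !zsum_scal, <- zsum_sub. apply zsum_ext_in. intros a _.
    rewrite zsum_scal, Hf. unfold c. ring. }
  assert (Anti : zsum2 (fun a b => (4 * a + 2 * c a) * Z.sgn (b - a)
                    - (fired s a - fired s b) * Z.sgn (b - a) + Z.abs (a - b)) s = 0).
  { apply zsum2_antisym. intros a b. rewrite !Hf.
    destruct (Z.sgn_spec (b - a)) as [[? ->]|[[? ->]|[? ->]]];
    destruct (Z.sgn_spec (a - b)) as [[? ->]|[[? ->]|[? ->]]]; lia. }
  rewrite zsum2_add, zsum2_sub in Anti. lia.
Qed.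

(* [collisions] counts ordered pairs of equal stacks; it never decreases, since
   firing preserves equality of stacks. *)
Definition same (a b : Z) : Z := if a =? b then 1 else 0.
Definition collisions (s : list Z) : Z := zsum2 same s.
Definition new_collision (s : list Z) (a b : Z) : Z := same (fired s a) (fired s b) - same a b.

Lemma new_collision_nonneg s a b : 0 <= new_collision s a b.
Proof.
  unfold new_collision, same. destruct (Z.eqb_spec a b) as [<-|]; [rewrite Z.eqb_refl; lia|].
  destruct (_ =? _); lia.
Qed.

Lemma collisions_fire s : collisions (fire s) = collisions s + zsum2 (new_collision s) s.
Proof. rewrite fire_map. unfold collisions, new_collision. rewrite zsum2_map, zsum2_sub. lia. Qed.

Lemma energy_iter k s : energy (Nat.iter k fire s) <= energy s.
Proof.
  induction k as [|k IH]; [apply Z.le_refl|]. rewrite Nat.iter_succ.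
  set (t := Nat.iter k fire s) in *. pose proof (energy_fire t).
  pose proof (zsum2_nonneg _ t (fun a b _ _ => dissipation_nonneg t a b)). lia.
Qed.

Lemma collisions_iter k s : collisions s <= collisions (Nat.iter k fire s).
Proof.
  induction k as [|k IH]; [apply Z.le_refl|]. rewrite Nat.iter_succ.
  set (t := Nat.iter k fire s) in *. pose proof (collisions_fire t).
  pose proof (zsum2_nonneg _ t (fun a b _ _ => new_collision_nonneg t a b)). lia.
Qed.

(* On a periodic orbit both Lyapunov functions are constant, so no pair dissipates
   energy (the order of each pair is weakly reversed) and no two distinct stacks
   collide (so it is strictly reversed). *)
Lemma period_order_reversing s : period_config s -> order_reversing s.
Proof.
  intros [k [Hk P]]. destruct k as [|k]; [lia|]. rewrite Nat.iter_succ_r in P.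
  assert (Ediss : zsum2 (dissipation s) s = 0).
  { pose proof (energy_fire s). pose proof (energy_iter k (fire s)).
    pose proof (zsum2_nonneg _ s (fun a b _ _ => dissipation_nonneg s a b)).
    assert (energy (Nat.iter k fire (fire s)) = energy s)
      by (unfold energy; rewrite (zsum_perm _ _ _ P), (zsum2_perm _ _ _ P); reflexivity).
    lia. }
  assert (Ecoll : zsum2 (new_collision s) s = 0).
  { pose proof (collisions_fire s). pose proof (collisions_iter k (fire s)).
    pose proof (zsum2_nonneg _ s (fun a b _ _ => new_collision_nonneg s a b)).
    assert (collisions (Nat.iter k fire (fire s)) = collisions s) by apply zsum2_perm, P.
    lia. }
  intros a b Ha Hb Hab.
  pose proof (zsum2_nonneg_eq0 _ _ (fun a b _ _ => dissipation_nonneg s a b) Ediss a b Ha Hb) as D.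
  pose proof (zsum2_nonneg_eq0 _ _ (fun a b _ _ => new_collision_nonneg s a b) Ecoll a b Ha Hb) as C.
  unfold dissipation in D. unfold new_collision, same in C.
  rewrite (proj2 (Z.sgn_pos_iff (b - a))) in D by lia.
  destruct (Z.eqb_spec a b); [lia|]. destruct (Z.eqb_spec (fired s a) (fired s b)); lia.
Qed.

Lemma filter_length_perm {X : Type} (p : X -> bool) (l1 l2 : list X) :
  Permutation l1 l2 -> length (filter p l1) = length (filter p l2).
Proof.
  induction 1; cbn; auto.
  - destruct (p x); cbn; auto.
  - destruct (p x), (p y); cbn; auto.
  - congruence.
Qed.

Lemma fired_perm s1 s2 x : Permutation s1 s2 -> fired s1 x = fired s2 x.
Proof. intro P. unfold fired, n_above, n_below. rewrite !(filter_length_perm _ _ _ P). reflexivity. Qed.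

Lemma fired_shift g s b : fired (map (Z.add g) s) (g + b) = g + fired s b.
Proof.
  unfold fired, n_above, n_below. rewrite !filter_map_swap, !length_map.
  rewrite (filter_ext (fun y => g + b <? g + y) (fun y => b <? y)),
          (filter_ext (fun y => g + y <? g + b) (fun y => y <? b))
    by (intro y; destruct (Z.ltb_spec (g + y) (g + b)), (Z.ltb_spec y b),
                          (Z.ltb_spec (g + b) (g + y)), (Z.ltb_spec b y); lia).
  lia.
Qed.

Lemma order_reversing_perm s1 s2 : Permutation s1 s2 -> order_reversing s1 -> order_reversing s2.
Proof.
  intros P R a b Ha Hb Hab. rewrite <- !(fired_perm _ _ _ P).
  apply R; auto; apply (Permutation_in _ (Permutation_sym P)); auto.
Qed.

Lemma order_reversing_shift g s : order_reversing (map (Z.add g) s) -> order_reversing s.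
Proof.
  intros R a b Ha Hb Hab.
  pose proof (R (g + a) (g + b) (in_map _ _ _ Ha) (in_map _ _ _ Hb) ltac:(lia)).
  rewrite !fired_shift in *. lia.
Qed.

Lemma fired_above_block mu m rest x : mu < x ->
  fired (repeat mu m ++ rest) x = fired rest x - Z.of_nat m.
Proof.
  intro H. unfold fired, n_above, n_below. rewrite !filter_app, !length_app.
  induction m as [|m IH]; cbn [repeat filter]; [lia|].
  destruct (Z.ltb_spec x mu), (Z.ltb_spec mu x); cbn [length] in *; lia.
Qed.

Lemma fired_bottom_block x m rest : (forall y, In y rest -> x < y) ->
  fired (repeat x m ++ rest) x = x + Z.of_nat (length rest).
Proof.
  intro H. unfold fired, n_above, n_below. rewrite !filter_app, !length_app.
  rewrite (filter_ext_in (fun y => x <? y) (fun _ => true) rest),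
          (filter_ext_in (fun y => y <? x) (fun _ => false) rest)
    by (intros y Hy; specialize (H y Hy); destruct (Z.ltb_spec x y), (Z.ltb_spec y x); lia).
  rewrite filter_true, filter_false.
  induction m as [|m IH]; cbn [repeat filter]; [cbn [length]; lia|].
  rewrite Z.ltb_irrefl. exact IH.
Qed.

Definition all_nonneg (t : list Z) : Prop := forall x, In x t -> 0 <= x.
Definition n_zeros (t : list Z) : nat := count_occ Z.eq_dec t 0.

Lemma n_zeros_repeat n : n_zeros (repeat 0 n) = n.
Proof. apply count_occ_repeat_eq. reflexivity. Qed.

Definition normal (n : nat) (t : list Z) : Prop :=
  length t = n /\ all_nonneg t /\ ((1 <= n)%nat -> In 0 t) /\ order_reversing t.

Lemma fired_zero t : all_nonneg t -> fired t 0 = Z.of_nat (length t) - Z.of_nat (n_zeros t).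
Proof.
  unfold fired, n_above, n_below, n_zeros. induction t as [|y t IH]; intro N; [reflexivity|].
  pose proof (N y (or_introl eq_refl)).
  specialize (IH (fun z Hz => N z (or_intror Hz))). cbn [filter count_occ length].
  destruct (Z.eq_dec y 0), (Z.ltb_spec 0 y), (Z.ltb_spec y 0); cbn [length]; lia.
Qed.

Lemma normal_translate_zero t1 t2 c : all_nonneg t1 -> all_nonneg t2 -> In 0 t1 -> In 0 t2 ->
  Permutation t1 (map (Z.add c) t2) -> c = 0.
Proof.
  intros N1 N2 I1 I2 P.
  apply (Permutation_in _ P), in_map_iff in I1 as [y [Hy Iy]]. pose proof (N2 y Iy).
  assert (Ic : In (c + 0) t1) by (apply (Permutation_in _ (Permutation_sym P)), in_map, I2).
  pose proof (N1 _ Ic). lia.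
Qed.

Lemma config_equiv_add s t : config_equiv s t <-> exists c, Permutation s (map (Z.add c) t).
Proof.
  unfold config_equiv.
  split; intros [c P]; exists c;
    [rewrite (map_ext (Z.add c) (fun x => x + c)) | rewrite (map_ext (fun x => x + c) (Z.add c))];
    auto; intros; lia.
Qed.

Lemma map_add0 t : map (Z.add 0) t = t.
Proof. rewrite <- (map_id t) at 2. apply map_ext. reflexivity. Qed.

Lemma map_add_add a b t : map (Z.add a) (map (Z.add b) t) = map (Z.add (a + b)) t.
Proof. rewrite map_map. apply map_ext. intro. lia. Qed.

Definition extend (m : nat) (g : Z) (t : list Z) : list Z := repeat 0 m ++ map (Z.add g) t.

Lemma in_extend m g t x :
  In x (extend m g t) <-> (x = 0 /\ (0 < m)%nat) \/ exists b, x = g + b /\ In b t.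
Proof.
  unfold extend. rewrite in_app_iff, in_map_iff. split.
  - intros [H|[b [<- H]]]; [left|right; eauto].
    destruct m; [destruct H|]. split; [exact (repeat_spec _ _ _ H)|lia].
  - intros [[-> H]|[b [-> H]]]; [left|right; eauto]. destruct m; [lia|left; reflexivity].
Qed.

Lemma n_zeros_extend m g t : 1 <= g -> all_nonneg t -> n_zeros (extend m g t) = m.
Proof.
  intros Hg N. unfold n_zeros, extend. rewrite count_occ_app, count_occ_repeat_eq by reflexivity.
  rewrite (proj1 (count_occ_not_In _ _ _)); [lia|].
  intro H. apply in_map_iff in H as [b [Hb Ib]]. pose proof (N b Ib). lia.
Qed.

Lemma fired_extend_zero m g t : 1 <= g -> all_nonneg t ->
  fired (extend m g t) 0 = Z.of_nat (length t).
Proof.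
  intros Hg N. unfold extend. rewrite fired_bottom_block, length_map; [lia|].
  intros y Hy. apply in_map_iff in Hy as [b [<- Hb]]. pose proof (N b Hb). lia.
Qed.

Lemma fired_extend_shift m g t b : 1 <= g -> 0 <= b ->
  fired (extend m g t) (g + b) = fired t b + g - Z.of_nat m.
Proof. intros Hg Hb. unfold extend. rewrite fired_above_block, fired_shift by lia. lia. Qed.

(* If the gap satisfies [g < m + n_zeros t], the zero block, which rises to
   [length t], overtakes the bottom of the lifted copy, which falls to
   [length t - n_zeros t + g - m]; so [extend m g t] is again a normal form. *)
Lemma normal_extend m g t j : (1 <= m)%nat -> (1 <= j)%nat -> normal j t ->
  1 <= g <= Z.of_nat (m + n_zeros t - 1) -> normal (m + j) (extend m g t).
Proof.
  intros Hm Hj [L [N [Z0 R]]] Hg. specialize (Z0 Hj).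
  assert (Hz : (1 <= n_zeros t)%nat) by (apply count_occ_In; exact Z0).
  split; [|split; [|split]].
  - unfold extend. rewrite length_app, repeat_length, length_map. lia.
  - intros x Hx. apply in_extend in Hx as [[-> _]|[b [-> Hb]]]; [lia|]. pose proof (N b Hb). lia.
  - intros _. apply in_extend. left. split; [reflexivity|lia].
  - intros a b Ha Hb Hab. apply in_extend in Ha, Hb.
    destruct Ha as [[-> _]|[a' [-> Ha']]]; destruct Hb as [[-> _]|[b' [-> Hb']]];
      [lia| | pose proof (N a' Ha'); lia|].
    + pose proof (N b' Hb'). rewrite fired_extend_zero, fired_extend_shift by (auto; lia).
      assert (fired t b' <= fired t 0).
      { destruct (Z.eq_dec b' 0) as [->|]; [lia|]. apply Z.lt_le_incl, R; auto; lia. }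
      rewrite fired_zero in *; auto. lia.
    + pose proof (N a' Ha'). pose proof (N b' Hb').
      rewrite !fired_extend_shift by lia. pose proof (R a' b' Ha' Hb' ltac:(lia)). lia.
Qed.

Lemma extend_gap_bound m g t : (1 <= m)%nat -> 1 <= g -> all_nonneg t -> In 0 t ->
  order_reversing (extend m g t) -> g < Z.of_nat m + Z.of_nat (n_zeros t).
Proof.
  intros Hm Hg N Z0 R.
  assert (I0 : In 0 (extend m g t)) by (apply in_extend; left; split; [reflexivity|lia]).
  assert (Ig : In (g + 0) (extend m g t)) by (apply in_extend; right; exists 0; auto).
  pose proof (R 0 (g + 0) I0 Ig ltac:(lia)) as X.
  rewrite fired_extend_zero, fired_extend_shift, fired_zero in X by (auto; lia).
  pose proof (count_occ_bound Z.eq_dec 0 t). unfold n_zeros in *. lia.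
Qed.

(** A normal form is either all zeros or
    [extend (n - j) g t] for a normal form [t] of size [1 <= j < n] and a gap
    [1 <= g <= n - j + n_zeros t - 1].  The recursion is on sizes [j < n]; the
    [fuel] argument only serves to make it structural ([fuel > n] suffices). *)

Definition gaps (k : nat) : list Z := map Z.of_nat (seq 1 k).

Definition extensions (n j : nat) (t : list Z) : list (list Z) :=
  map (fun g => extend (n - j) g t) (gaps (n - j + n_zeros t - 1)).

Fixpoint canon_fuel (fuel n : nat) : list (list Z) :=
  match fuel with
  | O => []
  | S fuel =>
      repeat 0 n :: flat_map (fun j => flat_map (extensions n j) (canon_fuel fuel j)) (seq 1 (n - 1))
  end.

Definition canon (n : nat) : list (list Z) := canon_fuel (S n) n.

Lemma in_gaps g k : In g (gaps k) <-> 1 <= g <= Z.of_nat k.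
Proof.
  unfold gaps. rewrite in_map_iff. split.
  - intros [x [<- Hx]]. apply in_seq in Hx. lia.
  - intro H. exists (Z.to_nat g). split; [lia|]. apply in_seq. lia.
Qed.

Lemma in_canon_fuel fuel n t : In t (canon_fuel (S fuel) n) <-> t = repeat 0 n \/
  exists j t' g, (1 <= j <= n - 1)%nat /\ In t' (canon_fuel fuel j) /\
    1 <= g <= Z.of_nat (n - j + n_zeros t' - 1) /\ t = extend (n - j) g t'.
Proof.
  cbn [canon_fuel In]. rewrite in_flat_map. split.
  - intros [H|[j [Hj H]]]; [left; auto|right].
    apply in_seq in Hj. apply in_flat_map in H as [t' [Ht' H]].
    apply in_map_iff in H as [g [<- Hg]]. apply in_gaps in Hg.
    exists j, t', g. repeat split; auto; lia.
  - intros [H|[j [t' [g [Hj [Ht' [Hg ->]]]]]]]; [left; auto|right].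
    exists j. split; [apply in_seq; lia|]. apply in_flat_map. exists t'. split; [exact Ht'|].
    apply in_map_iff. exists g. split; [reflexivity|]. apply in_gaps. lia.
Qed.

Lemma normal_zeros n : normal n (repeat 0 n).
Proof.
  split; [|split; [|split]].
  - apply repeat_length.
  - intros x Hx. apply repeat_spec in Hx. lia.
  - intro H. destruct n; [lia|left; reflexivity].
  - intros a b Ha Hb. apply repeat_spec in Ha, Hb. lia.
Qed.

Lemma canon_fuel_normal fuel n t : In t (canon_fuel fuel n) -> normal n t.
Proof.
  revert n t. induction fuel as [|fuel IH]; intros n t H; [destruct H|].
  apply in_canon_fuel in H as [->|[j [t' [g [Hj [Ht' [Hg ->]]]]]]]; [apply normal_zeros|].
  replace n with ((n - j) + j)%nat at 1 by lia. apply normal_extend; auto; lia.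
Qed.

(* Distinct members of the list are never rearrangements of each other:
   the number of zeros recovers [j], and translation invariance recovers [g]. *)
Lemma canon_fuel_perm_eq fuel n t1 t2 : In t1 (canon_fuel fuel n) -> In t2 (canon_fuel fuel n) ->
  Permutation t1 t2 -> t1 = t2.
Proof.
  revert n t1 t2. induction fuel as [|fuel IH]; intros n t1 t2 H1 H2 P; [destruct H1|].
  assert (Hz := proj1 (Permutation_count_occ Z.eq_dec _ _) P 0). fold (n_zeros t1) (n_zeros t2) in Hz.
  apply in_canon_fuel in H1 as [->|[j1 [t1' [g1 [Hj1 [Ht1 [Hg1 ->]]]]]]];
  apply in_canon_fuel in H2 as [->|[j2 [t2' [g2 [Hj2 [Ht2 [Hg2 ->]]]]]]]; auto.
  - destruct (canon_fuel_normal _ _ _ Ht2) as [_ [N2 _]].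
    rewrite n_zeros_extend, n_zeros_repeat in Hz by (auto; lia). lia.
  - destruct (canon_fuel_normal _ _ _ Ht1) as [_ [N1 _]].
    rewrite n_zeros_extend, n_zeros_repeat in Hz by (auto; lia). lia.
  - destruct (canon_fuel_normal _ _ _ Ht1) as [_ [N1 [Z1 _]]].
    destruct (canon_fuel_normal _ _ _ Ht2) as [_ [N2 [Z2 _]]].
    rewrite !n_zeros_extend in Hz by (auto; lia).
    assert (j2 = j1) as -> by lia.
    unfold extend in P. apply Permutation_app_inv_l, (Permutation_map (Z.add (- g1))) in P.
    rewrite !map_add_add, Z.add_opp_diag_l, map_add0 in P.
    assert (g2 = g1) as ->
      by (pose proof (normal_translate_zero _ _ _ N1 N2 (Z1 ltac:(lia)) (Z2 ltac:(lia)) P); lia).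
    rewrite Z.add_opp_diag_l, map_add0 in P. rewrite (IH j1 t1' t2' Ht1 Ht2 P). reflexivity.
Qed.

Lemma NoDup_flat_map_disjoint {X Y : Type} (F : X -> list Y) (l : list X) : NoDup l ->
  (forall x, In x l -> NoDup (F x)) ->
  (forall x y z, In x l -> In y l -> In z (F x) -> In z (F y) -> x = y) ->
  NoDup (flat_map F l).
Proof.
  induction l as [|a l IH]; intros Nl NF Inj; cbn; [constructor|]. inversion Nl; subst.
  apply NoDup_app.
  - apply NF. left. reflexivity.
  - apply IH; auto.
    + intros. apply NF. right. auto.
    + intros x y z Hx Hy. apply Inj; right; auto.
  - intros z Hz Hz'. apply in_flat_map in Hz' as [y [Hy Hz']].
    assert (a = y) as -> by (apply (Inj a y z); auto; [left|right]; auto). contradiction.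
Qed.

Lemma extend_injective m g1 g2 t1 t2 : all_nonneg t1 -> all_nonneg t2 -> In 0 t1 -> In 0 t2 ->
  extend m g1 t1 = extend m g2 t2 -> g1 = g2 /\ t1 = t2.
Proof.
  intros N1 N2 Z1 Z2 E. apply app_inv_head, (f_equal (map (Z.add (- g1)))) in E.
  rewrite !map_add_add, Z.add_opp_diag_l, map_add0 in E.
  assert (Hg : - g1 + g2 = 0).
  { apply (normal_translate_zero t1 t2); auto. rewrite E. apply Permutation_refl. }
  rewrite Hg, map_add0 in E. split; [lia|exact E].
Qed.

(* Each normal form is listed once: blocks for different [j] differ in their number
   of zeros, and within a block [extend_injective] separates the entries. *)
Lemma canon_fuel_NoDup fuel n : NoDup (canon_fuel fuel n).
Proof.
  revert n. induction fuel as [|fuel IH]; intro n; [constructor|].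
  assert (Zeros : forall j t g, (1 <= j)%nat -> In t (canon_fuel fuel j) -> 1 <= g ->
            n_zeros (extend (n - j) g t) = (n - j)%nat)
    by (intros j t g Hj Ht Hg; apply n_zeros_extend; [exact Hg|apply (canon_fuel_normal _ _ _ Ht)]).
  cbn [canon_fuel]. constructor.
  - intro H. apply in_flat_map in H as [j [Hj H]]. apply in_seq in Hj.
    apply in_flat_map in H as [t [Ht H]]. apply in_map_iff in H as [g [E Hg]]. apply in_gaps in Hg.
    apply (f_equal n_zeros) in E. rewrite Zeros in E by (auto; lia).
    rewrite n_zeros_repeat in E. lia.
  - apply NoDup_flat_map_disjoint; [apply seq_NoDup| |].
    + intros j Hj. apply in_seq in Hj. apply NoDup_flat_map_disjoint; [apply IH| |].
      * intros t Ht. destruct (canon_fuel_normal _ _ _ Ht) as [_ [N [Z0 _]]].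
        apply FinFun.Injective_map_NoDup.
        -- intros g1 g2 E.
           exact (proj1 (extend_injective _ _ _ _ _ N N (Z0 ltac:(lia)) (Z0 ltac:(lia)) E)).
        -- apply FinFun.Injective_map_NoDup; [intros x y; apply Nat2Z.inj|apply seq_NoDup].
      * intros t1 t2 z Ht1 Ht2 Hz1 Hz2.
        apply in_map_iff in Hz1 as [g1 [<- _]], Hz2 as [g2 [E _]].
        destruct (canon_fuel_normal _ _ _ Ht1) as [_ [N1 [Z1 _]]].
        destruct (canon_fuel_normal _ _ _ Ht2) as [_ [N2 [Z2 _]]].
        symmetry. exact (proj2 (extend_injective _ _ _ _ _ N2 N1 (Z2 ltac:(lia)) (Z1 ltac:(lia)) E)).
    + intros j1 j2 z Hj1 Hj2 H1 H2. apply in_seq in Hj1, Hj2.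
      apply in_flat_map in H1 as [t1 [Ht1 H1]], H2 as [t2 [Ht2 H2]].
      apply in_map_iff in H1 as [g1 [E1 Hg1]], H2 as [g2 [E2 Hg2]]. apply in_gaps in Hg1, Hg2.
      apply (f_equal n_zeros) in E1, E2. rewrite Zeros in E1, E2 by (auto; lia). lia.
Qed.

Lemma canon_fuel_equiv fuel n t1 t2 : (1 <= n)%nat ->
  In t1 (canon_fuel fuel n) -> In t2 (canon_fuel fuel n) -> config_equiv t1 t2 -> t1 = t2.
Proof.
  intros Hn H1 H2 [c P]%config_equiv_add.
  destruct (canon_fuel_normal _ _ _ H1) as [_ [N1 [Z1 _]]].
  destruct (canon_fuel_normal _ _ _ H2) as [_ [N2 [Z2 _]]].
  assert (c = 0) as -> by exact (normal_translate_zero _ _ _ N1 N2 (Z1 Hn) (Z2 Hn) P).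
  rewrite map_add0 in P. exact (canon_fuel_perm_eq _ _ _ _ H1 H2 P).
Qed.

Lemma exists_minimum (s : list Z) : s <> [] -> exists mu, In mu s /\ forall x, In x s -> mu <= x.
Proof.
  induction s as [|a s IH]; intro Hs; [congruence|].
  destruct s as [|b s]; [exists a; split; [left; auto|intros x [<-|[]]; lia]|].
  destruct IH as [mu [Hm Hx]]; [discriminate|].
  destruct (Z.le_gt_cases a mu).
  - exists a. split; [left; auto|]. intros x [<-|Hx']; [lia|]. specialize (Hx x Hx'). lia.
  - exists mu. split; [right; auto|]. intros x [<-|Hx']; [lia|auto].
Qed.

Lemma perm_separate (mu : Z) (s : list Z) :
  Permutation s (repeat mu (count_occ Z.eq_dec s mu) ++ filter (fun x => negb (x =? mu)) s).
Proof.
  apply Permutation_count_occ with (eq_dec := Z.eq_dec). intro x.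
  rewrite count_occ_app. destruct (Z.eq_dec mu x) as [<-|Hne].
  - rewrite count_occ_repeat_eq by reflexivity.
    rewrite (proj1 (count_occ_not_In _ (filter _ s) _)); [lia|].
    intro H. apply filter_In in H as [_ H]. rewrite Z.eqb_refl in H. discriminate.
  - rewrite count_occ_repeat_neq by auto. induction s as [|y s IH]; [reflexivity|].
    cbn [filter]. destruct (Z.eqb_spec y mu) as [->|Hy]; cbn [negb].
    + rewrite count_occ_cons_neq by auto. exact IH.
    + destruct (Z.eq_dec y x) as [->|Hyx];
        [rewrite !count_occ_cons_eq by reflexivity | rewrite !count_occ_cons_neq by auto]; lia.
Qed.

Lemma split_at_minimum s : s <> [] -> exists mu m rest, (1 <= m)%nat /\
  Permutation s (repeat mu m ++ rest) /\ forall x, In x rest -> mu < x.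
Proof.
  intro Hs. destruct (exists_minimum s Hs) as [mu [Hmu Hle]].
  exists mu, (count_occ Z.eq_dec s mu), (filter (fun x => negb (x =? mu)) s).
  split; [apply count_occ_In, Hmu|]. split; [apply perm_separate|].
  intros x Hx. apply filter_In in Hx as [Hx E]. specialize (Hle x Hx).
  destruct (Z.eqb_spec x mu); cbn in E; [discriminate|lia].
Qed.

Lemma order_reversing_drop_minimum mu m rest : (forall x, In x rest -> mu < x) ->
  order_reversing (repeat mu m ++ rest) -> order_reversing rest.
Proof.
  intros Hrest R a b Ha Hb Hab.
  pose proof (R a b (in_or_app _ _ _ (or_intror Ha)) (in_or_app _ _ _ (or_intror Hb)) Hab).
  rewrite !fired_above_block in * by auto. lia.
Qed.

(* Induction on the size: the stacks above the minimal block form a smaller order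
   reversing configuration, equivalent to some listed [t]; then [s] is a translate
   of [extend m g t], whose gap [g] is admissible by [extend_gap_bound]. *)
Lemma canon_fuel_complete n s fuel : length s = n -> order_reversing s -> (n < fuel)%nat ->
  exists t, In t (canon_fuel fuel n) /\ config_equiv s t.
Proof.
  revert s fuel. induction n as [n IH] using lt_wf_ind. intros s fuel Hl R Hf.
  destruct fuel as [|fuel]; [lia|].
  destruct s as [|x s0].
  { exists []. split; [apply in_canon_fuel; left; subst; reflexivity|exists 0; constructor]. }
  destruct (split_at_minimum (x :: s0) ltac:(discriminate)) as [mu [m [rest [Hm [Ps Hrest]]]]].
  set (s := x :: s0) in *.
  assert (Hn : n = (m + length rest)%nat)
    by (rewrite <- Hl, (Permutation_length Ps), length_app, repeat_length; reflexivity).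
  destruct rest as [|r rest0] eqn:Er.
  { exists (repeat 0 n). split; [apply in_canon_fuel; left; reflexivity|].
    apply config_equiv_add. exists mu. rewrite map_repeat, Z.add_0_r, app_nil_r in *.
    cbn in Hn. rewrite Hn, Nat.add_0_r. exact Ps. }
  rewrite <- Er in *. set (j := length rest) in *.
  assert (Hj : (1 <= j)%nat) by (unfold j; rewrite Er; cbn; lia).
  assert (Rrest : order_reversing rest)
    by exact (order_reversing_drop_minimum mu m rest Hrest (order_reversing_perm _ _ Ps R)).
  destruct (IH j ltac:(lia) rest fuel eq_refl Rrest ltac:(lia)) as [t [Ht [c Pc]%config_equiv_add]].
  destruct (canon_fuel_normal _ _ _ Ht) as [_ [Nt [Zt _]]]. specialize (Zt Hj).
  assert (Hc : mu < c)
    by (apply Hrest, (Permutation_in _ (Permutation_sym Pc)), in_map_iff;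
        exists 0; split; [lia|exact Zt]).
  assert (Ps' : Permutation s (map (Z.add mu) (extend m (c - mu) t))).
  { unfold extend. rewrite map_app, map_repeat, map_add_add, Z.add_0_r.
    replace (mu + (c - mu)) with c by lia.
    eapply Permutation_trans; [exact Ps|]. apply Permutation_app_head, Pc. }
  assert (Rt : order_reversing (extend m (c - mu) t))
    by (apply (order_reversing_shift mu), (order_reversing_perm s); auto).
  pose proof (extend_gap_bound m (c - mu) t Hm ltac:(lia) Nt Zt Rt).
  exists (extend m (c - mu) t). split.
  - apply in_canon_fuel. right. exists j, t, (c - mu). repeat split; auto; try lia. f_equal. lia.
  - apply config_equiv_add. exists mu. exact Ps'.
Qed.

(** Writing [A j] for the number of normal forms of size
    [j] and [B j] for their total number of zero stacks, the construction gives
      A (k+1) = 1 + sum_(1<=j<=k) ((k - j) A j + B j),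
      B (k+1) = (k+1) + sum_(1<=j<=k) (k+1-j) ((k - j) A j + B j).
    These convolutions are computed by a linear recursion on the vector
    (A n, B n, sum_(j<n) A j, sum_(j<n) (n - j) A j). *)

Record tally : Type := Tally { classes : Z; minima : Z; prefix : Z; weighted : Z }.

Definition tally_step (v : tally) : tally :=
  Tally (classes v + minima v + prefix v)
        (classes v + 2 * minima v + prefix v + weighted v)
        (classes v + prefix v)
        (classes v + prefix v + weighted v).

(* [tally_at k] is the vector for size [k + 1]. *)
Fixpoint tally_at (k : nat) : tally :=
  match k with O => Tally 1 1 0 0 | S k => tally_step (tally_at k) end.

Definition num_classes (n : nat) : Z := match n with O => 0 | S k => classes (tally_at k) end.
Definition num_minima (n : nat) : Z := match n with O => 0 | S k => minima (tally_at k) end.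

Lemma zsum_seq_succ (f : nat -> Z) k : zsum f (seq 1 (S k)) = zsum f (seq 1 k) + f (S k).
Proof. rewrite seq_S, zsum_app. cbn. lia. Qed.

Lemma tally_sums k :
  zsum num_classes (seq 1 k) = prefix (tally_at k) /\
  zsum (fun j => (Z.of_nat k + 1 - Z.of_nat j) * num_classes j) (seq 1 k) = weighted (tally_at k) /\
  classes (tally_at k) =
    1 + zsum (fun j => (Z.of_nat k - Z.of_nat j) * num_classes j + num_minima j) (seq 1 k) /\
  minima (tally_at k) = Z.of_nat k + 1 +
    zsum (fun j => (Z.of_nat k + 1 - Z.of_nat j) *
                   ((Z.of_nat k - Z.of_nat j) * num_classes j + num_minima j)) (seq 1 k).
Proof.
  induction k as [|k [IP [IW [IC IM]]]]; [cbn; lia|].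
  rewrite !zsum_seq_succ.
  cbn [tally_at tally_step classes minima prefix weighted num_classes num_minima].
  set (v := tally_at k) in *. rewrite !Nat2Z.inj_succ. set (K := Z.of_nat k) in *.
  set (a := num_classes) in *. set (b := num_minima) in *.
  assert (H1 : zsum (fun j => (Z.succ K + 1 - Z.of_nat j) * a j) (seq 1 k) =
               zsum (fun j => (K + 1 - Z.of_nat j) * a j) (seq 1 k) + zsum a (seq 1 k))
    by (rewrite <- zsum_add; apply zsum_ext_in; intros; ring).
  assert (H2 : zsum (fun j => (Z.succ K - Z.of_nat j) * a j + b j) (seq 1 k) =
               zsum (fun j => (K - Z.of_nat j) * a j + b j) (seq 1 k) + zsum a (seq 1 k))
    by (rewrite <- zsum_add; apply zsum_ext_in; intros; ring).
  assert (H3 : zsum (fun j => (Z.succ K + 1 - Z.of_nat j) *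
                              ((Z.succ K - Z.of_nat j) * a j + b j)) (seq 1 k) =
               zsum (fun j => (K + 1 - Z.of_nat j) * ((K - Z.of_nat j) * a j + b j)) (seq 1 k)
               + zsum (fun j => (K - Z.of_nat j) * a j + b j) (seq 1 k)
               + zsum (fun j => (K + 1 - Z.of_nat j) * a j) (seq 1 k) + zsum a (seq 1 k))
    by (rewrite <- !zsum_add; apply zsum_ext_in; intros; ring).
  rewrite H1, H2, H3. repeat split; lia.
Qed.

Lemma extensions_sums k j t : (j <= k)%nat -> (1 <= n_zeros t)%nat -> all_nonneg t ->
  zsum (fun _ => 1) (extensions (S k) j t) = Z.of_nat k - Z.of_nat j + Z.of_nat (n_zeros t) /\
  zsum (fun u => Z.of_nat (n_zeros u)) (extensions (S k) j t) =
    (Z.of_nat k + 1 - Z.of_nat j) * (Z.of_nat k - Z.of_nat j + Z.of_nat (n_zeros t)).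
Proof.
  intros Hj Hz N. unfold extensions. rewrite !zsum_map, zsum_const.
  rewrite (zsum_ext_in _ (fun _ => Z.of_nat (S k - j))), zsum_const
    by (intros g Hg; apply in_gaps in Hg; rewrite n_zeros_extend by (auto; lia); reflexivity).
  unfold gaps. rewrite length_map, length_seq. split; lia.
Qed.

Lemma canon_fuel_count fuel n : (n < fuel)%nat -> (1 <= n)%nat ->
  zsum (fun _ => 1) (canon_fuel fuel n) = num_classes n /\
  zsum (fun t => Z.of_nat (n_zeros t)) (canon_fuel fuel n) = num_minima n.
Proof.
  revert n. induction fuel as [|fuel IH]; intros n Hn H1; [lia|].
  destruct n as [|k]; [lia|].
  destruct (tally_sums k) as [_ [_ [IC IM]]].
  cbn [canon_fuel zsum num_classes num_minima]. replace (S k - 1)%nat with k by lia.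
  rewrite !zsum_flat_map, IC, IM, n_zeros_repeat.
  assert (Block : forall j, In j (seq 1 k) ->
    zsum (fun _ => 1) (flat_map (extensions (S k) j) (canon_fuel fuel j)) =
      (Z.of_nat k - Z.of_nat j) * num_classes j + num_minima j /\
    zsum (fun u => Z.of_nat (n_zeros u)) (flat_map (extensions (S k) j) (canon_fuel fuel j)) =
      (Z.of_nat k + 1 - Z.of_nat j) * ((Z.of_nat k - Z.of_nat j) * num_classes j + num_minima j)).
  { intros j Hj. apply in_seq in Hj. destruct (IH j ltac:(lia) ltac:(lia)) as [IA IB].
    assert (Ht : forall t, In t (canon_fuel fuel j) -> (1 <= n_zeros t)%nat /\ all_nonneg t).
    { intros t Ht. destruct (canon_fuel_normal _ _ _ Ht) as [_ [N [Z0 _]]].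
      split; [apply count_occ_In, Z0; lia|exact N]. }
    rewrite !zsum_flat_map. split.
    - rewrite (zsum_ext_in _ (fun t => (Z.of_nat k - Z.of_nat j) * 1 + Z.of_nat (n_zeros t)))
        by (intros t Ht'; destruct (Ht t Ht') as [Hz N];
            rewrite (proj1 (extensions_sums k j t ltac:(lia) Hz N)); ring).
      rewrite zsum_add, zsum_scal, IA, IB. ring.
    - rewrite (zsum_ext_in _ (fun t => (Z.of_nat k + 1 - Z.of_nat j) *
                                       ((Z.of_nat k - Z.of_nat j) * 1 + Z.of_nat (n_zeros t))))
        by (intros t Ht'; destruct (Ht t Ht') as [Hz N];
            rewrite (proj2 (extensions_sums k j t ltac:(lia) Hz N)); ring).
      rewrite zsum_scal, zsum_add, zsum_scal, IA, IB. ring. }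
  split; [rewrite (zsum_ext_in _ _ _ (fun j Hj => proj1 (Block j Hj)))
         |rewrite (zsum_ext_in _ _ _ (fun j Hj => proj2 (Block j Hj)))]; lia.
Qed.

Lemma length_canon n : (1 <= n)%nat -> Z.of_nat (length (canon n)) = num_classes n.
Proof.
  intro Hn. unfold canon. rewrite <- (proj1 (canon_fuel_count (S n) n ltac:(lia) Hn)), zsum_const. lia.
Qed.

(* The step matrix has characteristic polynomial x (x^3 - 5 x^2 + 7 x - 4). *)
Lemma tally_step_characteristic v :
  classes (tally_step (tally_step (tally_step (tally_step v)))) =
  5 * classes (tally_step (tally_step (tally_step v)))
  - 7 * classes (tally_step (tally_step v)) + 4 * classes (tally_step v).
Proof. destruct v. cbn [tally_step classes minima prefix weighted]. ring. Qed.

Lemma num_classes_recurrence n : (2 <= n)%nat ->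
  num_classes (n + 3) = 5 * num_classes (n + 2) - 7 * num_classes (n + 1) + 4 * num_classes n.
Proof.
  intro Hn. replace n with (S (S (n - 2))) by lia.
  rewrite !Nat.add_succ_r, !Nat.add_0_r. apply tally_step_characteristic.
Qed.

Lemma num_classes_initial : num_classes 2 = 2 /\ num_classes 3 = 6 /\ num_classes 4 = 19.
Proof. repeat split; reflexivity. Qed.

Lemma ForallOrdPairs_of_NoDup {A : Type} (Rel : A -> A -> Prop) (l : list A) : NoDup l ->
  (forall x y, In x l -> In y l -> Rel x y -> x = y) -> ForallOrdPairs (fun x y => ~ Rel x y) l.
Proof.
  induction 1 as [|x l Hnot Nd IH]; intro Inj; constructor.
  - apply Forall_forall. intros y Hy E. apply Hnot. rewrite (Inj x y); auto; [left|right]; auto.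
  - apply IH. intros; apply Inj; auto; right; auto.
Qed.

Lemma canon_classifies n : num_period_classes n (length (canon n)).
Proof.
  exists (canon n). split; [reflexivity|]. split; [|split].
  - apply Forall_forall. intros t Ht. destruct (canon_fuel_normal _ _ _ Ht) as [L [_ [_ R]]].
    split; [exact L|apply order_reversing_period, R].
  - assert (Ineq : forall t1 t2, In t1 (canon n) -> In t2 (canon n) -> config_equiv t1 t2 -> t1 = t2).
    { destruct n as [|n].
      - intros t1 t2 H1 H2 _. destruct H1 as [<-|[]], H2 as [<-|[]]. reflexivity.
      - intros t1 t2. apply canon_fuel_equiv. lia. }
    exact (ForallOrdPairs_of_NoDup config_equiv _ (canon_fuel_NoDup (S n) n) Ineq).
  - intros s Hl P.
    destruct (canon_fuel_complete n s (S n) Hl (period_order_reversing s P) ltac:(lia)) as [t [Ht E]].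
    apply Exists_exists. eauto.
Qed.

Local Close Scope Z_scope.
Local Open Scope R_scope.

(** Asymptotics of the recurrence with characteristic polynomial
    x^3 - 5 x^2 + 7 x - 4 = (x - alpha) (x^2 + (alpha - 5) x + (alpha^2 - 5 alpha + 7)).
    The quadratic factor has complex roots of modulus < 3 < alpha, so after
    removing the alpha-component a solution is dominated by 3^n. *)

(* For [lo > 3] the cubic minus its value at [lo] is [(x - lo)] times a positive
   quadratic, so the sign of the cubic at [lo] locates the real root. *)
Lemma cubic_root_bracket al lo : 3 < lo -> al ^ 3 - 5 * al ^ 2 + 7 * al - 4 = 0 ->
  (lo ^ 3 - 5 * lo ^ 2 + 7 * lo - 4 < 0 -> lo < al) /\
  (0 < lo ^ 3 - 5 * lo ^ 2 + 7 * lo - 4 -> al < lo).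
Proof.
  intros Hlo Hal.
  assert (Q : 0 < al ^ 2 + (lo - 5) * al + (lo ^ 2 - 5 * lo + 7))
    by (pose proof (pow2_ge_0 (al + (lo - 5) / 2)); nra).
  assert (E : al ^ 3 - 5 * al ^ 2 + 7 * al - 4 - (lo ^ 3 - 5 * lo ^ 2 + 7 * lo - 4) =
              (al - lo) * (al ^ 2 + (lo - 5) * al + (lo ^ 2 - 5 * lo + 7))) by ring.
  split; intro H; nra.
Qed.

Lemma alpha_bounds al : al ^ 3 - 5 * al ^ 2 + 7 * al - 4 = 0 -> 32055 / 10000 < al < 32057 / 10000.
Proof.
  intro H. split.
  - apply (cubic_root_bracket al); [lra|exact H|lra].
  - apply (cubic_root_bracket al); [lra|exact H|lra].
Qed.

Lemma second_order_bound p q r (e : nat -> R) : 0 < r -> Rabs p * r + Rabs q <= r ^ 2 ->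
  (forall n, e (S (S n)) = - p * e (S n) - q * e n) ->
  forall n, Rabs (e n) <= (Rabs (e 0%nat) + Rabs (e 1%nat) / r) * r ^ n.
Proof.
  intros Hr Hpq Hrec. set (K := Rabs (e 0%nat) + Rabs (e 1%nat) / r).
  assert (H1r : 0 <= Rabs (e 1%nat) / r)
    by (apply Rmult_le_pos; [apply Rabs_pos|apply Rlt_le, Rinv_0_lt_compat, Hr]).
  assert (H1K : Rabs (e 1%nat) / r * r = Rabs (e 1%nat)) by (field; lra).
  pose proof (Rabs_pos (e 0%nat)).
  assert (HK0 : 0 <= K) by (unfold K; lra).
  assert (Both : forall n, Rabs (e n) <= K * r ^ n /\ Rabs (e (S n)) <= K * r ^ S n).
  { induction n as [|n [IH0 IH1]].
    - cbn. unfold K. split; nra.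
    - split; [exact IH1|]. rewrite Hrec.
      pose proof (pow_le r n (Rlt_le _ _ Hr)) as Hrn.
      assert (T : Rabs (- p * e (S n) - q * e n) <= Rabs p * Rabs (e (S n)) + Rabs q * Rabs (e n)).
      { unfold Rminus. eapply Rle_trans; [apply Rabs_triang|].
        rewrite Rabs_Ropp, !Rabs_mult, Rabs_Ropp. lra. }
      assert (Hp : Rabs p * Rabs (e (S n)) <= Rabs p * (K * r ^ S n))
        by (apply Rmult_le_compat_l; [apply Rabs_pos|exact IH1]).
      assert (Hq : Rabs q * Rabs (e n) <= Rabs q * (K * r ^ n))
        by (apply Rmult_le_compat_l; [apply Rabs_pos|exact IH0]).
      assert (Hg : (Rabs p * r + Rabs q) * (K * r ^ n) <= r ^ 2 * (K * r ^ n))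
        by (apply Rmult_le_compat_r; [apply Rmult_le_pos|]; auto).
      cbn [pow] in *. nra. }
  intro n. exact (proj1 (Both n)).
Qed.

Lemma Un_cv_const (c : R) : Un_cv (fun _ => c) c.
Proof.
  intros eps Heps. exists 0%nat. intros. unfold R_dist. rewrite Rminus_diag, Rabs_R0. exact Heps.
Qed.

Lemma geometric_domination K r al (e : nat -> R) : 0 <= r < al ->
  (forall n, Rabs (e n) <= K * r ^ n) -> Un_cv (fun n => e n / al ^ n) 0.
Proof.
  intros [Hr0 Hral] Hb eps Heps.
  assert (HK : 0 <= K) by (specialize (Hb 0%nat); cbn in Hb; pose proof (Rabs_pos (e 0%nat)); lra).
  assert (Hratio : Rabs (r / al) < 1).
  { rewrite Rabs_pos_eq by (apply Rmult_le_pos; [lra|apply Rlt_le, Rinv_0_lt_compat; lra]).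
    apply Rmult_lt_reg_r with al; [lra|]. unfold Rdiv. rewrite Rmult_assoc, Rinv_l; lra. }
  destruct (pow_lt_1_zero (r / al) Hratio (eps / (K + 1))) as [N HN];
    [apply Rdiv_lt_0_compat; lra|].
  exists N. intros n Hn. unfold R_dist. rewrite Rminus_0_r.
  specialize (HN n Hn). specialize (Hb n).
  pose proof (pow_lt al n ltac:(lra)) as Han. pose proof (pow_le r n Hr0) as Hrn.
  assert (Hq : Rabs ((r / al) ^ n) = r ^ n / al ^ n).
  { unfold Rdiv. rewrite Rpow_mult_distr, pow_inv. apply Rabs_pos_eq.
    apply Rmult_le_pos; [lra|apply Rlt_le, Rinv_0_lt_compat, Han]. }
  assert (He : Rabs (e n / al ^ n) = Rabs (e n) / al ^ n)
    by (unfold Rdiv; rewrite Rabs_mult, Rabs_inv, (Rabs_pos_eq (al ^ n)); lra).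
  rewrite He. rewrite Hq in HN.
  apply Rle_lt_trans with (K * (r ^ n / al ^ n)).
  { unfold Rdiv. rewrite <- Rmult_assoc.
    apply Rmult_le_compat_r; [apply Rlt_le, Rinv_0_lt_compat, Han|exact Hb]. }
  apply Rle_lt_trans with (K * (eps / (K + 1))); [apply Rmult_le_compat_l; lra|].
  replace (K * (eps / (K + 1))) with (eps * (K / (K + 1))) by (field; lra).
  assert (K / (K + 1) < 1)
    by (apply Rmult_lt_reg_r with (K + 1); [lra|]; unfold Rdiv; rewrite Rmult_assoc, Rinv_l; lra).
  nra.
Qed.

Lemma cubic_recurrence_limit al (u : nat -> R) : al ^ 3 - 5 * al ^ 2 + 7 * al - 4 = 0 ->
  (forall n, u (n + 3)%nat = 5 * u (n + 2)%nat - 7 * u (n + 1)%nat + 4 * u n) ->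
  Un_cv (fun n => u n / al ^ n)
    ((u 2%nat + (al - 5) * u 1%nat + (al ^ 2 - 5 * al + 7) * u 0%nat) / (3 * al ^ 2 - 10 * al + 7)).
Proof.
  intros Hal Hrec. destruct (alpha_bounds al Hal) as [Hlo _].
  set (p := al - 5). set (q := al ^ 2 - 5 * al + 7).
  set (L := (u 2%nat + p * u 1%nat + q * u 0%nat) / (3 * al ^ 2 - 10 * al + 7)).
  set (e := fun n => u n - L * al ^ n).
  (* The alpha-component of [e] vanishes, so [e] solves the quadratic recurrence. *)
  assert (Quad : forall n, e (S (S n)) = - p * e (S n) - q * e n).
  { assert (Hd : 0 < 3 * al ^ 2 - 10 * al + 7) by nra.
    assert (D : forall n, e (n + 2)%nat + p * e (n + 1)%nat + q * e n = 0).
    { induction n as [|n IH].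
      - assert (HL : L * (3 * al ^ 2 - 10 * al + 7) = u 2%nat + p * u 1%nat + q * u 0%nat)
          by (unfold L; field; lra).
        unfold e. cbn [Nat.add pow]. unfold p, q in *. nra.
      - replace (S n + 2)%nat with (n + 3)%nat by lia. replace (S n + 1)%nat with (n + 2)%nat by lia.
        replace (S n) with (n + 1)%nat by lia.
        assert (Step : e (n + 3)%nat + p * e (n + 2)%nat + q * e (n + 1)%nat =
          al * (e (n + 2)%nat + p * e (n + 1)%nat + q * e n)
          + (u (n + 3)%nat - 5 * u (n + 2)%nat + 7 * u (n + 1)%nat - 4 * u n)
          - (L * al ^ n + e n) * (al ^ 3 - 5 * al ^ 2 + 7 * al - 4))
          by (unfold e, p, q; rewrite !pow_add; cbn [pow]; ring).
        rewrite Step, IH, Hrec, Hal. ring. }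
    intro n. pose proof (D n). replace (n + 2)%nat with (S (S n)) in * by lia.
    replace (n + 1)%nat with (S n) in * by lia. lra. }
  assert (Bound := second_order_bound p q 3 e ltac:(lra)
                     ltac:(unfold p, q; rewrite Rabs_left, Rabs_pos_eq by nra; nra) Quad).
  pose proof (geometric_domination _ 3 al e ltac:(lra) Bound) as Small.
  replace L with (L + 0) by ring.
  apply Un_cv_ext with (fun n => L + e n / al ^ n).
  - intro n. unfold e. field. apply pow_nonzero. lra.
  - apply CV_plus; [apply Un_cv_const|exact Small].
Qed.

(** The constant of the asymptotics: (2 al^2 - 4 al + 3) / (al^2 (3 al^2 - 10 al + 7)),
    with the denominator reduced modulo the cubic. *)
Definition class_constant (al : R) : R := (2 * al ^ 2 - 4 * al + 3) / (11 * al ^ 2 - 23 * al + 20).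

Lemma class_constant_bounds al : al ^ 3 - 5 * al ^ 2 + 7 * al - 4 = 0 ->
  0 < class_constant al /\ 1808 / 10000 < class_constant al < 1810 / 10000.
Proof.
  intro H. destruct (alpha_bounds al H) as [Hlo Hhi].
  assert (D : 0 < 11 * al ^ 2 - 23 * al + 20) by nra.
  assert (Hc : class_constant al * (11 * al ^ 2 - 23 * al + 20) = 2 * al ^ 2 - 4 * al + 3)
    by (unfold class_constant; field; lra).
  assert (1808 / 10000 * (11 * al ^ 2 - 23 * al + 20) < 2 * al ^ 2 - 4 * al + 3) by nra.
  assert (2 * al ^ 2 - 4 * al + 3 < 1810 / 10000 * (11 * al ^ 2 - 23 * al + 20)) by nra.
  split; [|split]; nra.
Qed.

(* The number of classes, [num_classes n] for n >= 1, satisfies the cubic recurrence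
   from n = 2 on; shifting by two and dividing the limit by [al^2] gives the constant. *)
Lemma canon_asymptotics al : al ^ 3 - 5 * al ^ 2 + 7 * al - 4 = 0 ->
  Un_cv (fun n => INR (length (canon n)) / al ^ n) (class_constant al).
Proof.
  intro Hal. destruct (alpha_bounds al Hal) as [Hlo _].
  set (u := fun n => IZR (num_classes (n + 2))).
  assert (Rec : forall n, u (n + 3)%nat = 5 * u (n + 2)%nat - 7 * u (n + 1)%nat + 4 * u n).
  { intro n. unfold u. replace (n + 3 + 2)%nat with (n + 2 + 3)%nat by lia.
    replace (n + 1 + 2)%nat with (n + 2 + 1)%nat by lia.
    rewrite num_classes_recurrence, plus_IZR, minus_IZR, !mult_IZR by lia. reflexivity. }
  pose proof (cubic_recurrence_limit al u Hal Rec) as Lim.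
  destruct num_classes_initial as [A2 [A3 A4]].
  unfold u in Lim at 2 3 4. cbn [Nat.add] in Lim. rewrite A2, A3, A4 in Lim.
  apply CV_shift with 2%nat.
  apply Un_cv_ext with (fun n => u n / al ^ n * / al ^ 2).
  - intro n. unfold u. rewrite INR_IZR_INZ, length_canon by lia. rewrite pow_add.
    field. split; [lra|apply pow_nonzero; lra].
  - replace (class_constant al) with
      ((19 + (al - 5) * 6 + (al ^ 2 - 5 * al + 7) * 2) / (3 * al ^ 2 - 10 * al + 7) * / al ^ 2).
    + apply CV_mult; [exact Lim|apply Un_cv_const].
    + unfold class_constant.
      assert (E : al ^ 2 * (3 * al ^ 2 - 10 * al + 7) = 11 * al ^ 2 - 23 * al + 20 +
                  (3 * al + 5) * (al ^ 3 - 5 * al ^ 2 + 7 * al - 4)) by ring.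
      rewrite Hal, Rmult_0_r, Rplus_0_r in E. rewrite <- E. field. split; nra.
Qed.

Theorem corollary4p4 :
  forall alpha : R,
    alpha ^ 3 - 5 * alpha ^ 2 + 7 * alpha - 4 = 0 ->
    exists a : nat -> nat,
      (forall n : nat, num_period_classes n (a n)) /\
      exists c : R,
        0 < c /\ 1808 / 10000 < c < 1810 / 10000 /\
        Un_cv (fun n => INR (a n) / alpha ^ n) c.
Proof.
  intros alpha Halpha.
  exists (fun n => length (canon n)). split; [exact canon_classifies|].
  exists (class_constant alpha). split; [|split].
  - apply class_constant_bounds, Halpha.
  - apply class_constant_bounds, Halpha.
  - apply canon_asymptotics, Halpha.
Qed.
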